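(* Let $n\ge 2$, let $\gamma$ be an admissible Jordan arc, and let $f:\gamma\to\mathbb{C}$ be such that $f^{(n+1)}$ exists and is continuous on $\gamma$. Then for every $k=1,2,\dots,n-1$ and all $z_1\ne z_2$ in $\gamma$, \[ |d_1^{\,k}(f\,|\,z_1,z_2)|\le\frac{C_{\gamma,k}}{k+1}, \] where \[ C_{\gamma,k}=\sup_{z\in\gamma}|f^{(k+1)}(z)|+\sup_{z_1,z_2\in\gamma,\ z_1\ne z_2}\left|\frac{\int_{z_2}^{z_1}(z-z_2)^{k+1}f^{(k+2)}(z)\,dz}{(z_1-z_2)^{k+1}}\right| \] is finite and depends only on $f,\gamma,k$.
   Context: A Jordan arc is the image of $[0,1]$ under a homeomorphism into $\mathbb{C}$; it is admissible if it is the image of a parametrization $\phi\in C^1([0,1])$ with $\phi'(t)\ne0$ for all $t\in[0,1]$ (one-sided at endpoints). For $g$ on $\gamma$, $g'(z_1)=\lim_{z\to z_1,\,z\in\gamma}\frac{g(z)-g(z_1)}{z-z_1}$; higher derivatives $g^{(k)}$ are defined inductively. For $z_1=\phi(t_1),z_2=\phi(t_2)$, $\int_{z_2}^{z_1}g(z)\,dz:=\int_{t_2}^{t_1}g(\phi(t))\phi'(t)\,dt$. $d_1(f\,|\,z_1,z_2)=\frac{f(z_1)-f(z_2)}{z_1-z_2}$ and $d_1^{\,k}(f\,|\,z_1,z_2)$ is its $k$-th derivative along $\gamma$ with respect to $z_1$. *)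

From Stdlib Require Import Reals.
Open Scope R_scope.

Definition Cx : Type := (R * R)%type.
Definition Cx0 : Cx := (0, 0).
Definition RtoC (r : R) : Cx := (r, 0).
Definition Cadd (z w : Cx) : Cx := (fst z + fst w, snd z + snd w).
Definition Copp (z : Cx) : Cx := (- fst z, - snd z).
Definition Csub (z w : Cx) : Cx := Cadd z (Copp w).
Definition Cmul (z w : Cx) : Cx :=
  (fst z * fst w - snd z * snd w, fst z * snd w + snd z * fst w).
Definition Cinv (z : Cx) : Cx :=
  let d := fst z ^ 2 + snd z ^ 2 in (fst z / d, - snd z / d).
Definition Cdiv (z w : Cx) : Cx := Cmul z (Cinv w).
Fixpoint Cpow (z : Cx) (n : nat) : Cx :=
  match n with O => (1, 0) | S m => Cmul z (Cpow z m) end.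
Definition Cnorm (z : Cx) : R := sqrt (fst z ^ 2 + snd z ^ 2).

Definition param_deriv (phi dphi : R -> Cx) : Prop :=
  forall t, 0 <= t <= 1 -> forall eps, eps > 0 -> exists delta, delta > 0 /\
    forall s, 0 <= s <= 1 -> s <> t -> Rabs (s - t) < delta ->
      Cnorm (Csub (Cdiv (Csub (phi s) (phi t)) (RtoC (s - t))) (dphi t)) < eps.

Definition cont_on01 (g : R -> Cx) : Prop :=
  forall t, 0 <= t <= 1 -> forall eps, eps > 0 -> exists delta, delta > 0 /\
    forall s, 0 <= s <= 1 -> Rabs (s - t) < delta -> Cnorm (Csub (g s) (g t)) < eps.

(* phi is an admissible parametrization: Cx^1 on [0,1], phi' <> 0, injective on [0,1]
   (a continuous injection of [0,1] is a homeomorphism onto its image, so its image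
   is a Jordan arc). *)
Definition admissible_param (phi dphi : R -> Cx) : Prop :=
  param_deriv phi dphi /\ cont_on01 dphi /\
  (forall t, 0 <= t <= 1 -> dphi t <> Cx0) /\
  (forall s t, 0 <= s <= 1 -> 0 <= t <= 1 -> phi s = phi t -> s = t).

Definition on_arc (phi : R -> Cx) (z : Cx) : Prop := exists t, 0 <= t <= 1 /\ phi t = z.

Definition arc_deriv (G : Cx -> Prop) (g g1 : Cx -> Cx) (z1 : Cx) : Prop :=
  forall eps, eps > 0 -> exists delta, delta > 0 /\
    forall z, G z -> z <> z1 -> Cnorm (Csub z z1) < delta ->
      Cnorm (Csub (Cdiv (Csub (g z) (g z1)) (Csub z z1)) (g1 z1)) < eps.

Definition arc_cont (G : Cx -> Prop) (g : Cx -> Cx) : Prop :=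
  forall z1, G z1 -> forall eps, eps > 0 -> exists delta, delta > 0 /\
    forall z, G z -> Cnorm (Csub z z1) < delta -> Cnorm (Csub (g z) (g z1)) < eps.

Definition deriv_chain (G P : Cx -> Prop) (g : Cx -> Cx) (D : nat -> Cx -> Cx) (m : nat) : Prop :=
  (forall z, P z -> D O z = g z) /\
  (forall j, (j < m)%nat -> forall z, P z -> arc_deriv G (D j) (D (S j)) z).

(* v = \int_{z2}^{z1} g(z) dz := \int_{t2}^{t1} g(phi t) phi'(t) dt, z_i = phi(t_i) *)
Definition arc_integral (phi dphi : R -> Cx) (g : Cx -> Cx) (z2 z1 v : Cx) : Prop :=
  exists t1 t2, 0 <= t1 <= 1 /\ 0 <= t2 <= 1 /\ phi t1 = z1 /\ phi t2 = z2 /\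
  exists (pr1 : Riemann_integrable (fun t => fst (Cmul (g (phi t)) (dphi t))) t2 t1)
         (pr2 : Riemann_integrable (fun t => snd (Cmul (g (phi t)) (dphi t))) t2 t1),
    v = (RiemannInt pr1, RiemannInt pr2).

Definition divdiff (f : Cx -> Cx) (z2 : Cx) : Cx -> Cx :=
  fun z => Cdiv (Csub (f z) (f z2)) (Csub z z2).

(* Let [R_j(z) = f(z2) - sum_(i <= j) f^(i)(z) (z2 - z)^i / i!] be the Taylor remainder of [f]
   about [z], evaluated at [z2]. Its derivative along the arc telescopes to
   [- f^(j+1)(z) (z2 - z)^j / j!], and differentiating [d_1(f | z, z2) = - R_0(z) / (z - z2)]
   [j] times gives [d_1^j(f | z, z2) = - (-1)^j j! R_j(z) / (z - z2)^(j+1)]. Since [R_(k+1)]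
   vanishes at [z2], integrating its derivative along the arc writes [R_(k+1)(z1)] as a multiple
   of [I = \int_(z2)^(z1) (z - z2)^(k+1) f^(k+2)(z) dz], and [R_k = R_(k+1) + f^(k+1)(z1)
   (z2 - z1)^(k+1) / (k+1)!] then yields
     [(k+1) d_1^k(f | z1, z2) = f^(k+1)(z1) - I / (z1 - z2)^(k+1)],
   whence the estimate by the triangle inequality. Derivatives along the arc are unique because
   it has no isolated points, so every chain of derivatives of [d_1(f | ., z2)] agrees with the
   closed form. The second supremum is finite because an injective regular parametrization is
   bi-Lipschitz ([c |s - t| <= |phi s - phi t|] by compactness), so the ratio is
   [O(|t1 - t2|)]. *)

From Pilot Require Import Defs.
From Coquelicot Require Import Coquelicot.
From Stdlib Require Import Reals Lra Lia ClassicalEpsilon.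
Open Scope R_scope.

Notation CC := Complex.C.

Lemma Cmod_sub_sym (a b : CC) : Cmod (a - b) = Cmod (b - a).
Proof. replace (a - b)%C with (- (b - a))%C by ring. apply Cmod_opp. Qed.

Lemma Cmod_triangle_sub (a b c : CC) : Cmod (a - c) <= Cmod (a - b) + Cmod (b - c).
Proof. replace (a - c)%C with ((a - b) + (b - c))%C by ring. apply Cmod_triangle. Qed.

Lemma Cmod_reverse_triangle (a b : CC) : Cmod a - Cmod b <= Cmod (a - b).
Proof.
  pose proof (Cmod_triangle_sub a b 0) as T.
  replace (a - 0)%C with a in T by ring. replace (b - 0)%C with b in T by ring. lra.
Qed.

Lemma Rabs_Cmod_sub_le (a b : CC) : Rabs (Cmod a - Cmod b) <= Cmod (a - b).
Proof.
  pose proof (Cmod_reverse_triangle a b). pose proof (Cmod_reverse_triangle b a).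
  rewrite Cmod_sub_sym in H0. unfold Rabs; destruct Rcase_abs; lra.
Qed.

Lemma Rabs_fst_le_Cmod (z : CC) : Rabs (fst z) <= Cmod z.
Proof. pose proof (Rmax_Cmod z). pose proof (Rmax_l (Rabs (fst z)) (Rabs (snd z))). lra. Qed.

Lemma Rabs_snd_le_Cmod (z : CC) : Rabs (snd z) <= Cmod z.
Proof. pose proof (Rmax_Cmod z). pose proof (Rmax_r (Rabs (fst z)) (Rabs (snd z))). lra. Qed.

Lemma Cmod_le_Rabs_fst_snd (z : CC) : Cmod z <= Rabs (fst z) + Rabs (snd z).
Proof.
  pose proof (Rabs_pos (fst z)). pose proof (Rabs_pos (snd z)).
  unfold Cmod. rewrite <- (sqrt_Rsqr (Rabs (fst z) + Rabs (snd z))) by lra.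
  apply sqrt_le_1_alt. unfold Rsqr.
  rewrite <- (pow2_abs (fst z)), <- (pow2_abs (snd z)). nra.
Qed.

Lemma Cminus_neq0 (a b : CC) : a <> b -> (a - b)%C <> 0%C.
Proof. intros N E. apply N. replace a with ((a - b) + b)%C by ring. rewrite E; ring. Qed.

Lemma RtoC_neq0 r : r <> 0 -> RtoC r <> 0%C.
Proof. intros N E. apply N. injection E. auto. Qed.

Lemma Cmult_neq0 (a b : CC) : a <> 0%C -> b <> 0%C -> (a * b)%C <> 0%C.
Proof.
  intros Ha Hb. apply Cmod_gt_0. rewrite Cmod_mult.
  apply Rmult_lt_0_compat; apply Cmod_gt_0; auto.
Qed.

Lemma Cpow_neq0 (u : CC) m : u <> 0%C -> Cpow u m <> 0%C.
Proof. intros H. apply Cmod_gt_0. rewrite Cmod_pow. apply pow_lt. apply Cmod_gt_0; auto. Qed.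

Lemma Cpow_Cinv (u : CC) m : u <> 0%C -> Cpow (/ u) m = (/ Cpow u m)%C.
Proof.
  intros H. induction m as [|m IH]; simpl; [field|].
  rewrite IH. field. split; auto. apply Cpow_neq0; auto.
Qed.

Definition Csign (m : nat) : CC := RtoC ((-1) ^ m).
Definition Cfact (m : nat) : CC := RtoC (INR (Factorial.fact m)).

Lemma Csign_S m : Csign (S m) = (- Csign m)%C.
Proof. unfold Csign. apply injective_projections; simpl; ring. Qed.

Lemma Csign_sqr m : (Csign m * Csign m)%C = 1%C.
Proof.
  induction m as [|m IH]; [unfold Csign; apply injective_projections; simpl; ring|].
  rewrite Csign_S. rewrite <- IH. ring.
Qed.

Lemma Cfact_S m : Cfact (S m) = (RtoC (INR (S m)) * Cfact m)%C.
Proof. unfold Cfact. rewrite fact_simpl, mult_INR. apply injective_projections; simpl; ring. Qed.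

Lemma Cfact_neq0 m : Cfact m <> 0%C.
Proof. apply RtoC_neq0, INR_fact_neq_0. Qed.

Lemma RtoC_INR_S_neq0 m : RtoC (INR (S m)) <> 0%C.
Proof. apply RtoC_neq0, not_0_INR. lia. Qed.

Lemma Cpow_sub_swap (a b : CC) m : Cpow (a - b) m = (Csign m * Cpow (b - a) m)%C.
Proof.
  induction m as [|m IH]; simpl Cpow.
  - unfold Csign. apply injective_projections; simpl; ring.
  - rewrite IH, Csign_S. ring.
Qed.

(* [F x -> L] as [d x -> 0] for [x] in [P]; [d] measures the distance to the limit point. *)
Definition lim_in {X : Type} (P : X -> Prop) (d : X -> R) (F : X -> CC) (L : CC) :=
  forall eps, eps > 0 -> exists delta, delta > 0 /\
    forall x, P x -> d x < delta -> Cmod (F x - L) < eps.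

Section LimIn.
Context {X : Type} (P : X -> Prop) (d : X -> R).

Lemma lim_in_const c : lim_in P d (fun _ => c) c.
Proof.
  intros e He. exists 1. split; [lra|]. intros.
  replace (c - c)%C with (RtoC 0) by ring. rewrite Cmod_0. lra.
Qed.

Lemma lim_in_ext_loc F G L r : r > 0 -> (forall x, P x -> d x < r -> F x = G x) ->
  lim_in P d F L -> lim_in P d G L.
Proof.
  intros Hr HE HF e He. destruct (HF e He) as [dl [Hd H]]. exists (Rmin dl r).
  split; [apply Rmin_pos; auto|]. intros x Px Dx.
  pose proof (Rmin_l dl r). pose proof (Rmin_r dl r).
  rewrite <- HE by (auto; lra). apply H; auto; lra.
Qed.

Lemma lim_in_ext F G L : (forall x, P x -> F x = G x) -> lim_in P d F L -> lim_in P d G L.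
Proof. intros HE. apply lim_in_ext_loc with 1; auto; lra. Qed.

Lemma lim_in_plus F G L M :
  lim_in P d F L -> lim_in P d G M -> lim_in P d (fun x => F x + G x)%C (L + M)%C.
Proof.
  intros HF HG e He.
  destruct (HF (e/2)) as [d1 [Hd1 H1]]; [lra|]. destruct (HG (e/2)) as [d2 [Hd2 H2]]; [lra|].
  exists (Rmin d1 d2). split; [apply Rmin_pos; auto|]. intros x Px Dx.
  pose proof (Rmin_l d1 d2). pose proof (Rmin_r d1 d2).
  assert (Cmod (F x - L) < e/2) by (apply H1; auto; lra).
  assert (Cmod (G x - M) < e/2) by (apply H2; auto; lra).
  replace (F x + G x - (L + M))%C with ((F x - L) + (G x - M))%C by ring.
  pose proof (Cmod_triangle (F x - L) (G x - M)). lra.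
Qed.

Lemma lim_in_mult F G L M :
  lim_in P d F L -> lim_in P d G M -> lim_in P d (fun x => F x * G x)%C (L * M)%C.
Proof.
  intros HF HG e He. pose proof (Cmod_ge_0 L). pose proof (Cmod_ge_0 M).
  set (K := 1 + Cmod L + Cmod M).
  set (eta := Rmin 1 (e / (2 * K))).
  assert (Heta : eta > 0) by (apply Rmin_pos; [lra | apply Rdiv_lt_0_compat; unfold K; lra]).
  assert (Heta1 : eta <= 1) by apply Rmin_l.
  assert (HetaK : eta * K < e).
  { assert (Hle : eta <= e / (2 * K)) by apply Rmin_r.
    assert (e / (2 * K) * K = e / 2) by (field; unfold K; lra).
    assert (eta * K <= e / (2 * K) * K) by (apply Rmult_le_compat_r; [unfold K; lra | exact Hle]).
    lra. }
  destruct (HF eta Heta) as [d1 [Hd1 H1]]. destruct (HG eta Heta) as [d2 [Hd2 H2]].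
  exists (Rmin d1 d2). split; [apply Rmin_pos; auto|]. intros x Px Dx.
  pose proof (Rmin_l d1 d2). pose proof (Rmin_r d1 d2).
  assert (A1 : Cmod (F x - L) < eta) by (apply H1; auto; lra).
  assert (A2 : Cmod (G x - M) < eta) by (apply H2; auto; lra).
  replace (F x * G x - L * M)%C
    with ((F x - L) * (G x - M) + L * (G x - M) + (F x - L) * M)%C by ring.
  pose proof (Cmod_triangle ((F x - L) * (G x - M) + L * (G x - M)) ((F x - L) * M)).
  pose proof (Cmod_triangle ((F x - L) * (G x - M)) (L * (G x - M))).
  rewrite !Cmod_mult in *.
  pose proof (Cmod_ge_0 (F x - L)). pose proof (Cmod_ge_0 (G x - M)).
  assert (Cmod (F x - L) * Cmod (G x - M) <= eta * 1) by (apply Rmult_le_compat; lra).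
  assert (Cmod L * Cmod (G x - M) <= Cmod L * eta) by (apply Rmult_le_compat_l; lra).
  assert (Cmod (F x - L) * Cmod M <= eta * Cmod M) by (apply Rmult_le_compat_r; lra).
  unfold K in HetaK. lra.
Qed.

Lemma lim_in_opp F L : lim_in P d F L -> lim_in P d (fun x => - F x)%C (- L)%C.
Proof.
  intros H. apply lim_in_ext with (fun x => (-1) * F x)%C; [intros; ring|].
  replace (- L)%C with ((-1) * L)%C by ring. apply lim_in_mult; auto. apply lim_in_const.
Qed.

Lemma lim_in_minus F G L M :
  lim_in P d F L -> lim_in P d G M -> lim_in P d (fun x => F x - G x)%C (L - M)%C.
Proof. intros. apply lim_in_plus; auto. apply lim_in_opp; auto. Qed.

Lemma lim_in_inv (G : X -> CC) (M : CC) :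
  M <> 0%C -> lim_in P d G M -> lim_in P d (fun x => / G x)%C (/ M)%C.
Proof.
  intros HM HG e He. pose proof (proj1 (Cmod_gt_0 M) HM) as Mp.
  set (eta := Rmin (Cmod M / 2) (e * (Cmod M * Cmod M) / 2)).
  assert (Heta : eta > 0).
  { apply Rmin_pos; [lra|]. apply Rdiv_lt_0_compat; [|lra]. apply Rmult_lt_0_compat; nra. }
  assert (eta <= Cmod M / 2) by apply Rmin_l.
  assert (eta <= e * (Cmod M * Cmod M) / 2) by apply Rmin_r.
  destruct (HG eta Heta) as [d1 [Hd1 H1]]. exists d1. split; auto. intros x Px Dx.
  specialize (H1 x Px Dx). rewrite Cmod_sub_sym in H1.
  (* [G x] stays away from 0, so [1 / |G x M| <= 2 / |M|^2] *)
  assert (Gp : Cmod (G x) > Cmod M / 2).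
  { pose proof (Cmod_reverse_triangle M (M - G x)).
    replace (M - (M - G x))%C with (G x) in H2 by ring. lra. }
  assert (G0 : G x <> 0%C) by (intro E; rewrite E, Cmod_0 in Gp; lra).
  replace (/ G x - / M)%C with ((M - G x) / (G x * M))%C by (field; auto).
  rewrite Cmod_div, Cmod_mult by (apply Cmult_neq0; auto).
  apply Rmult_lt_reg_r with (Cmod (G x) * Cmod M); [nra|].
  unfold Rdiv. rewrite Rmult_assoc, Rinv_l, Rmult_1_r by nra.
  apply Rlt_le_trans with (e * (Cmod M * Cmod M) / 2); [lra|].
  assert (e * (Cmod M / 2 * Cmod M) <= e * (Cmod (G x) * Cmod M)) by
    (apply Rmult_le_compat_l; [lra | apply Rmult_le_compat_r; lra]).
  lra.
Qed.

Lemma lim_in_unique F L1 L2 : (forall delta, delta > 0 -> exists x, P x /\ d x < delta) ->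
  lim_in P d F L1 -> lim_in P d F L2 -> L1 = L2.
Proof.
  intros Hacc H1 H2. destruct (Ceq_dec L1 L2) as [E|N]; auto. exfalso.
  pose proof (proj1 (Cmod_gt_0 _) (Cminus_neq0 _ _ N)) as HP.
  set (e := Cmod (L1 - L2) / 2).
  destruct (H1 e) as [d1 [Hd1 A1]]; [unfold e; lra|].
  destruct (H2 e) as [d2 [Hd2 A2]]; [unfold e; lra|].
  destruct (Hacc (Rmin d1 d2)) as [x [Px Dx]]; [apply Rmin_pos; auto|].
  pose proof (Rmin_l d1 d2). pose proof (Rmin_r d1 d2).
  specialize (A1 x Px ltac:(lra)). specialize (A2 x Px ltac:(lra)).
  pose proof (Cmod_triangle_sub L1 (F x) L2). rewrite Cmod_sub_sym in A1. unfold e in *. lra.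
Qed.

End LimIn.

Lemma lim_in_comp {X Y : Type} (P : X -> Prop) (d : X -> R) (Q : Y -> Prop) (e : Y -> R)
  (psi : Y -> X) F L :
  lim_in P d F L -> (forall y, Q y -> P (psi y)) ->
  (forall eta, eta > 0 -> exists delta, delta > 0 /\
     forall y, Q y -> e y < delta -> d (psi y) < eta) ->
  lim_in Q e (fun y => F (psi y)) L.
Proof.
  intros HF HQ HC ep Hep. destruct (HF ep Hep) as [d1 [Hd1 H1]].
  destruct (HC d1 Hd1) as [d2 [Hd2 H2]]. exists d2. split; auto.
Qed.

Definition dist_to (z1 z : CC) : R := Cmod (z - z1).

Definition is_deriv_along (G : CC -> Prop) (g : CC -> CC) (z1 L : CC) :=
  lim_in (fun z => G z /\ z <> z1) (dist_to z1) (fun z => (g z - g z1) / (z - z1))%C L.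

Section DerivAlong.
Variable G : CC -> Prop.

Lemma arc_deriv_is_deriv_along g g1 z1 : arc_deriv G g g1 z1 <-> is_deriv_along G g z1 (g1 z1).
Proof.
  split; intros H e He; destruct (H e He) as [dl [Hd H']]; exists dl; (split; [exact Hd|]).
  - intros z [Gz Nz] Dz. exact (H' z Gz Nz Dz).
  - intros z Gz Nz Dz. exact (H' z (conj Gz Nz) Dz).
Qed.

Lemma is_deriv_along_cont_punctured g z1 L :
  is_deriv_along G g z1 L -> lim_in (fun z => G z /\ z <> z1) (dist_to z1) g (g z1).
Proof.
  intros H.
  apply lim_in_ext with (fun z => g z1 + (g z - g z1) / (z - z1) * (z - z1))%C.
  { intros z [_ Nz]. field. apply Cminus_neq0; auto. }
  assert (Hid : lim_in (fun z => G z /\ z <> z1) (dist_to z1) (fun z => z) z1).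
  { intros e He. exists e. split; auto. }
  pose proof (lim_in_plus _ _ _ _ _ _ (lim_in_const _ _ (g z1))
    (lim_in_mult _ _ _ _ _ _ H (lim_in_minus _ _ _ _ _ _ Hid (lim_in_const _ _ z1)))) as K.
  replace (g z1 + L * (z1 - z1))%C with (g z1) in K by ring. exact K.
Qed.

Lemma is_deriv_along_cont g z1 L : is_deriv_along G g z1 L -> lim_in G (dist_to z1) g (g z1).
Proof.
  intros H e He. destruct (is_deriv_along_cont_punctured g z1 L H e He) as [d [Hd Hd']].
  exists d. split; auto. intros z Gz Dz. destruct (Ceq_dec z z1) as [->|N].
  - replace (g z1 - g z1)%C with (RtoC 0) by ring. rewrite Cmod_0. lra.
  - apply Hd'; auto.
Qed.

Lemma is_deriv_along_ext_loc g h z1 L r : r > 0 ->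
  (forall z, G z -> Cmod (z - z1) < r -> g z = h z) -> g z1 = h z1 ->
  is_deriv_along G g z1 L -> is_deriv_along G h z1 L.
Proof.
  intros Hr HE H1. apply lim_in_ext_loc with r; auto.
  intros z [Gz _] Dz. rewrite HE, H1; auto.
Qed.

Lemma is_deriv_along_ext g h z1 L :
  (forall z, g z = h z) -> is_deriv_along G g z1 L -> is_deriv_along G h z1 L.
Proof. intros E. apply is_deriv_along_ext_loc with 1; auto; lra. Qed.

Lemma is_deriv_along_const c z1 : is_deriv_along G (fun _ => c) z1 0%C.
Proof.
  apply lim_in_ext with (fun _ => 0%C); [|apply lim_in_const].
  intros z [_ Nz]. field. apply Cminus_neq0; auto.
Qed.

Lemma is_deriv_along_id z1 : is_deriv_along G (fun z => z) z1 1%C.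
Proof.
  apply lim_in_ext with (fun _ => 1%C); [|apply lim_in_const].
  intros z [_ Nz]. field. apply Cminus_neq0; auto.
Qed.

Lemma is_deriv_along_minus g h z1 L M :
  is_deriv_along G g z1 L -> is_deriv_along G h z1 M ->
  is_deriv_along G (fun z => g z - h z)%C z1 (L - M)%C.
Proof.
  intros. apply lim_in_ext with (fun z => (g z - g z1) / (z - z1) - (h z - h z1) / (z - z1))%C.
  - intros z [_ Nz]. field. apply Cminus_neq0; auto.
  - apply lim_in_minus; auto.
Qed.

Lemma is_deriv_along_mult g h z1 L M :
  is_deriv_along G g z1 L -> is_deriv_along G h z1 M ->
  is_deriv_along G (fun z => g z * h z)%C z1 (L * h z1 + g z1 * M)%C.
Proof.
  intros Hg Hh.
  apply lim_in_ext with
    (fun z => (g z - g z1) / (z - z1) * h z + g z1 * ((h z - h z1) / (z - z1)))%C.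
  - intros z [_ Nz]. field. apply Cminus_neq0; auto.
  - apply lim_in_plus; apply lim_in_mult; auto.
    + eapply is_deriv_along_cont_punctured; eauto.
    + apply lim_in_const.
Qed.

Lemma is_deriv_along_scal c g z1 L :
  is_deriv_along G g z1 L -> is_deriv_along G (fun z => c * g z)%C z1 (c * L)%C.
Proof.
  intros H. replace (c * L)%C with (0 * g z1 + c * L)%C by ring.
  apply is_deriv_along_mult; auto. apply is_deriv_along_const.
Qed.

Lemma is_deriv_along_inv g z1 L : is_deriv_along G g z1 L -> g z1 <> 0%C ->
  is_deriv_along G (fun z => / g z)%C z1 (- L / (g z1 * g z1))%C.
Proof.
  intros Hg N. pose proof (proj1 (Cmod_gt_0 _) N) as Np.
  destruct (is_deriv_along_cont_punctured _ _ _ Hg (Cmod (g z1)) Np) as [r [Hr Hr']].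
  apply lim_in_ext_loc with (fun z => - ((g z - g z1) / (z - z1)) * / (g z * g z1))%C r; auto.
  - intros z [Gz Nz] Dz. specialize (Hr' z (conj Gz Nz) Dz).
    assert (g z <> 0%C).
    { intro E. rewrite E, Cmod_sub_sym in Hr'.
      replace (g z1 - 0)%C with (g z1) in Hr' by ring. lra. }
    field. repeat split; auto. apply Cminus_neq0; auto.
  - apply lim_in_mult; [apply lim_in_opp; auto|].
    apply lim_in_inv; [apply Cmult_neq0; auto|].
    apply lim_in_mult; [eapply is_deriv_along_cont_punctured; eauto | apply lim_in_const].
Qed.

Lemma is_deriv_along_pow g z1 L n : is_deriv_along G g z1 L ->
  is_deriv_along G (fun z => Cpow (g z) (S n)) z1 (RtoC (INR (S n)) * Cpow (g z1) n * L)%C.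
Proof.
  intros H. induction n as [|n IH].
  - apply is_deriv_along_ext with g; [intros; simpl; ring|].
    replace (RtoC (INR 1) * Cpow (g z1) 0 * L)%C with L; auto. simpl; ring.
  - replace (RtoC (INR (S (S n))) * Cpow (g z1) (S n) * L)%C
      with (L * Cpow (g z1) (S n) + g z1 * (RtoC (INR (S n)) * Cpow (g z1) n * L))%C.
    + apply (is_deriv_along_mult g (fun z => Cpow (g z) (S n))); auto.
    + rewrite (S_INR (S n)), RtoC_plus. simpl Cpow. ring.
Qed.

End DerivAlong.

Definition clamp01 (t : R) : R := Rmax 0 (Rmin 1 t).

Ltac clamp01_cases :=
  unfold clamp01, Rmax, Rmin in *; repeat destruct Rle_dec;
  unfold Rabs in *; repeat destruct Rcase_abs; lra.

Lemma clamp01_id t : 0 <= t <= 1 -> clamp01 t = t.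
Proof. intros. clamp01_cases. Qed.

Lemma clamp01_in t : 0 <= clamp01 t <= 1.
Proof. clamp01_cases. Qed.

Lemma clamp01_lipschitz s t : Rabs (clamp01 s - clamp01 t) <= Rabs (s - t).
Proof. clamp01_cases. Qed.

Lemma clamp01_nearest s t : 0 <= t <= 1 -> Rabs (s - clamp01 s) <= Rabs (s - t).
Proof. intros. clamp01_cases. Qed.

Lemma between01 a b t : 0 <= a <= 1 -> 0 <= b <= 1 -> Rmin a b <= t <= Rmax a b -> 0 <= t <= 1.
Proof. intros. pose proof (Rmin_glb a b 0). pose proof (Rmax_lub a b 1). lra. Qed.

Lemma Rabs_between_lt a b t u r : Rmin a b <= t <= Rmax a b ->
  Rabs (a - u) < r -> Rabs (b - u) < r -> Rabs (t - u) < r.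
Proof.
  unfold Rmin, Rmax, Rabs. intros. repeat destruct Rle_dec; repeat destruct Rcase_abs; lra.
Qed.

Lemma Rabs_between_le a b t : Rmin b a <= t <= Rmax b a -> Rabs (t - b) <= Rabs (a - b).
Proof.
  unfold Rmin, Rmax, Rabs. intros. repeat destruct Rle_dec; repeat destruct Rcase_abs; lra.
Qed.

Lemma affine_extension_quotient (h h' : R -> R) e t s eps :
  s <> t -> Rabs (e - t) <= Rabs (s - t) -> Rabs (s - e) <= Rabs (s - t) ->
  (t <> e -> Rabs ((h e - h t) / (e - t) - h' t) < eps / 2) -> Rabs (h' e - h' t) < eps / 2 ->
  Rabs ((h e + (s - e) * h' e - h t) / (s - t) - h' t) < eps.
Proof.
  intros Hst Ha Hb HQ HD. assert (Hst' : s - t <> 0) by lra.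
  destruct (Req_dec t e) as [<-|N].
  - replace ((h t + (s - t) * h' t - h t) / (s - t) - h' t) with 0 by (field; auto).
    rewrite Rabs_R0. pose proof (Rabs_pos (h' t - h' t)). lra.
  - specialize (HQ N). set (Q := (h e - h t) / (e - t) - h' t) in *.
    (* the quotient is a combination of [Q] and [h' e - h' t] with coefficients of modulus <= 1 *)
    replace ((h e + (s - e) * h' e - h t) / (s - t) - h' t) with
      ((e - t) / (s - t) * Q + (s - e) / (s - t) * (h' e - h' t)) by (unfold Q; field; lra).
    assert (Hcoef : forall u, Rabs u <= Rabs (s - t) -> Rabs (u / (s - t)) <= 1).
    { intros u Hu. unfold Rdiv. rewrite Rabs_mult, Rabs_inv.
      apply Rmult_le_reg_r with (Rabs (s - t)); [apply Rabs_pos_lt; auto|].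
      rewrite Rmult_assoc, Rinv_l by (apply Rabs_no_R0; auto). lra. }
    pose proof (Hcoef _ Ha). pose proof (Hcoef _ Hb).
    pose proof (Rabs_triang ((e - t) / (s - t) * Q) ((s - e) / (s - t) * (h' e - h' t))).
    rewrite !Rabs_mult in *.
    pose proof (Rabs_pos ((e - t) / (s - t))). pose proof (Rabs_pos ((s - e) / (s - t))).
    pose proof (Rabs_pos Q). pose proof (Rabs_pos (h' e - h' t)). nra.
Qed.

Definition affine_extension (h h' : R -> R) (t : R) : R :=
  h (clamp01 t) + (t - clamp01 t) * h' (clamp01 t).

(* Extending [h] affinely beyond [0, 1] turns its one-sided derivatives at the endpoints into
   two-sided ones, so that Coquelicot's fundamental theorem of calculus applies. *)
Section OneSidedFTC.
Variables h h' : R -> R.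
Hypothesis h_deriv : forall t, 0 <= t <= 1 -> forall eps, eps > 0 -> exists delta, delta > 0 /\
  forall s, 0 <= s <= 1 -> s <> t -> Rabs (s - t) < delta ->
    Rabs ((h s - h t) / (s - t) - h' t) < eps.
Hypothesis h'_cont : forall t, 0 <= t <= 1 -> forall eps, eps > 0 -> exists delta, delta > 0 /\
  forall s, 0 <= s <= 1 -> Rabs (s - t) < delta -> Rabs (h' s - h' t) < eps.

Lemma affine_extension_outside t c : (t < 0 /\ c = 0) \/ (1 < t /\ c = 1) ->
  derivable_pt_lim (affine_extension h h') t (h' c).
Proof.
  intros Ht e He.
  assert (dp : 0 < Rmin (Rabs t) (Rabs (t - 1))) by
    (apply Rmin_pos; apply Rabs_pos_lt; lra).
  exists (mkposreal _ dp). intros hh Hh Hl. simpl in Hl.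
  assert (E : forall x, Rabs (x - t) < Rmin (Rabs t) (Rabs (t - 1)) -> clamp01 x = c).
  { intros x Hx. destruct Ht as [[? ->]|[? ->]]; clamp01_cases. }
  assert (Rabs (t + hh - t) < Rmin (Rabs t) (Rabs (t - 1)))
    by (replace (t + hh - t) with hh by ring; exact Hl).
  assert (Rabs (t - t) < Rmin (Rabs t) (Rabs (t - 1))) by (rewrite Rminus_diag, Rabs_R0; exact dp).
  unfold affine_extension. rewrite (E (t + hh)), (E t) by assumption.
  replace ((h c + (t + hh - c) * h' c - (h c + (t - c) * h' c)) / hh - h' c) with 0
    by (field; auto).
  rewrite Rabs_R0. lra.
Qed.

Lemma affine_extension_inside t : 0 <= t <= 1 ->
  derivable_pt_lim (affine_extension h h') t (h' t).
Proof.
  intros Ht e He.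
  destruct (h_deriv t Ht (e/2)) as [d1 [Hd1 H1]]; [lra|].
  destruct (h'_cont t Ht (e/2)) as [d2 [Hd2 H2]]; [lra|].
  assert (dp : 0 < Rmin d1 d2) by (apply Rmin_pos; auto).
  exists (mkposreal _ dp). intros hh Hh Hl. simpl in Hl.
  pose proof (Rmin_l d1 d2). pose proof (Rmin_r d1 d2).
  unfold affine_extension. rewrite (clamp01_id t Ht), Rminus_diag, Rmult_0_l, Rplus_0_r.
  set (s := t + hh). assert (Ehh : hh = s - t) by (unfold s; ring). clearbody s. subst hh.
  pose proof (clamp01_in s).
  pose proof (clamp01_lipschitz s t) as Hlip. rewrite (clamp01_id t Ht) in Hlip.
  pose proof (clamp01_nearest s t Ht).
  apply affine_extension_quotient; auto; try lra.
  - intros N. apply H1; auto; lra.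
  - apply H2; auto; lra.
Qed.

Lemma is_RInt_one_sided_deriv a b : 0 <= a <= 1 -> 0 <= b <= 1 -> is_RInt h' a b (h b - h a).
Proof.
  intros Ha Hb.
  assert (Hder : forall t, derivable_pt_lim (affine_extension h h') t (h' (clamp01 t))).
  { intros t. destruct (Rlt_dec t 0) as [Tn|Tn]; [|destruct (Rlt_dec 1 t) as [Tp|Tp]].
    - apply affine_extension_outside. left. split; [lra | clamp01_cases].
    - apply affine_extension_outside. right. split; [lra | clamp01_cases].
    - rewrite clamp01_id by lra. apply affine_extension_inside. lra. }
  assert (Hcont : forall t, continuity_pt (fun t => h' (clamp01 t)) t).
  { intros t e He. destruct (h'_cont (clamp01 t) (clamp01_in t) e He) as [dl [Hdl H]].
    exists dl. split; auto. intros x [_ Dx]. simpl in *. unfold R_dist in *.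
    apply H; [apply clamp01_in|]. eapply Rle_lt_trans; [apply clamp01_lipschitz | auto]. }
  assert (HI : is_RInt (fun t => h' (clamp01 t)) a b
                 (minus (affine_extension h h' b) (affine_extension h h' a))).
  { apply (is_RInt_derive (V := R_CompleteNormedModule)).
    - intros x _. apply is_derive_Reals. apply Hder.
    - intros x _. apply continuity_pt_filterlim. apply Hcont. }
  replace (h b - h a) with (minus (affine_extension h h' b) (affine_extension h h' a)).
  - apply is_RInt_ext with (fun t => h' (clamp01 t)); auto.
    intros x Hx. rewrite clamp01_id; auto. apply (between01 a b); auto. lra.
  - unfold affine_extension. rewrite (clamp01_id a), (clamp01_id b) by auto.
    unfold minus, plus, opp; simpl. ring.
Qed.

End OneSidedFTC.

Lemma lim_in_fst {X : Type} (P : X -> Prop) d F L : lim_in P d F L ->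
  forall eps, eps > 0 -> exists delta, delta > 0 /\
    forall x, P x -> d x < delta -> Rabs (fst (F x) - fst L) < eps.
Proof.
  intros H e He. destruct (H e He) as [dl [Hd H']]. exists dl. split; auto. intros x Px Dx.
  eapply Rle_lt_trans; [|apply (H' x Px Dx)].
  replace (fst (F x) - fst L) with (fst (F x - L)%C) by (simpl; ring). apply Rabs_fst_le_Cmod.
Qed.

Lemma lim_in_snd {X : Type} (P : X -> Prop) d F L : lim_in P d F L ->
  forall eps, eps > 0 -> exists delta, delta > 0 /\
    forall x, P x -> d x < delta -> Rabs (snd (F x) - snd L) < eps.
Proof.
  intros H e He. destruct (H e He) as [dl [Hd H']]. exists dl. split; auto. intros x Px Dx.
  eapply Rle_lt_trans; [|apply (H' x Px Dx)].
  replace (snd (F x) - snd L) with (snd (F x - L)%C) by (simpl; ring). apply Rabs_snd_le_Cmod.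
Qed.

Definition is_deriv01 (H H' : R -> CC) : Prop :=
  forall t, 0 <= t <= 1 ->
    lim_in (fun s => 0 <= s <= 1 /\ s <> t) (fun s => Rabs (s - t))
      (fun s => (H s - H t) / RtoC (s - t))%C (H' t).

Definition cont01 (H : R -> CC) : Prop :=
  forall t, 0 <= t <= 1 -> lim_in (fun s => 0 <= s <= 1) (fun s => Rabs (s - t)) H (H t).

Lemma param_deriv_is_deriv01 H H' : param_deriv H H' -> is_deriv01 H H'.
Proof.
  intros P t Ht e He. destruct (P t Ht e He) as [d [Hd Hd']]. exists d. split; auto.
  intros s [Hs Ns] Ds. apply Hd'; auto.
Qed.

Lemma cont_on01_cont01 H : cont_on01 H -> cont01 H.
Proof. intros P t Ht e He. destruct (P t Ht e He) as [d [Hd Hd']]. exists d. split; auto. Qed.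

Lemma is_deriv01_cont01 H H' : is_deriv01 H H' -> cont01 H.
Proof.
  intros HD t Ht.
  assert (Hlin : lim_in (fun s => 0 <= s <= 1 /\ s <> t) (fun s => Rabs (s - t))
                   (fun s => RtoC (s - t)) (RtoC 0)).
  { intros e He. exists e. split; auto. intros s _ Ds.
    replace (RtoC (s - t) - RtoC 0)%C with (RtoC (s - t)) by ring. rewrite Cmod_R. auto. }
  pose proof (lim_in_plus _ _ _ _ _ _ (lim_in_const _ _ (H t))
                (lim_in_mult _ _ _ _ _ _ (HD t Ht) Hlin)) as K.
  replace (H t + H' t * RtoC 0)%C with (H t) in K by ring.
  intros e He. destruct (K e He) as [d [Hd Hd']]. exists d. split; auto. intros s Hs Ds.
  destruct (Req_dec s t) as [->|N].
  - replace (H t - H t)%C with (RtoC 0) by ring. rewrite Cmod_0. lra.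
  - replace (H s) with (H t + (H s - H t) / RtoC (s - t) * RtoC (s - t))%C.
    + apply Hd'; auto.
    + field. apply RtoC_neq0. lra.
Qed.

Lemma cont01_const c : cont01 (fun _ => c).
Proof. intros t _. apply lim_in_const. Qed.

Lemma cont01_minus g h : cont01 g -> cont01 h -> cont01 (fun t => g t - h t)%C.
Proof. intros Hg Hh t Ht. apply lim_in_minus; auto. Qed.

Lemma cont01_mult g h : cont01 g -> cont01 h -> cont01 (fun t => g t * h t)%C.
Proof. intros Hg Hh t Ht. apply lim_in_mult; auto. Qed.

Lemma cont01_pow g m : cont01 g -> cont01 (fun t => Cpow (g t) m).
Proof.
  intros Hg. induction m as [|m IH]; simpl; [apply cont01_const | apply cont01_mult; auto].
Qed.

Lemma cont01_bounded g : cont01 g -> exists M, 0 <= M /\ forall t, 0 <= t <= 1 -> Cmod (g t) <= M.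
Proof.
  intros Hg. destruct (continuity_ab_maj (fun t => Cmod (g (clamp01 t))) 0 1) as [t0 [HM _]].
  - lra.
  - intros c _ e He. destruct (Hg (clamp01 c) (clamp01_in c) e He) as [d [Hd Hd']].
    exists d. split; auto. intros x [_ Dx]. simpl in *. unfold R_dist in *.
    eapply Rle_lt_trans; [apply Rabs_Cmod_sub_le|].
    apply Hd'; [apply clamp01_in|]. eapply Rle_lt_trans; [apply clamp01_lipschitz | auto].
  - exists (Cmod (g (clamp01 t0))). split; [apply Cmod_ge_0|].
    intros t Ht. rewrite <- (clamp01_id t Ht). apply HM; auto.
Qed.

Lemma is_RInt_deriv01 H H' : is_deriv01 H H' -> cont01 H' ->
  forall a b, 0 <= a <= 1 -> 0 <= b <= 1 ->
    is_RInt (fun t => fst (H' t)) a b (fst (H b) - fst (H a)) /\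
    is_RInt (fun t => snd (H' t)) a b (snd (H b) - snd (H a)).
Proof.
  intros HD HC a b Ha Hb.
  split; [apply (is_RInt_one_sided_deriv (fun t => fst (H t)))
         | apply (is_RInt_one_sided_deriv (fun t => snd (H t)))]; auto.
  - intros t Ht e He. destruct (lim_in_fst _ _ _ _ (HD t Ht) e He) as [d [Hd Hd']].
    exists d. split; auto. intros s Hs Ns Ds.
    replace ((fst (H s) - fst (H t)) / (s - t))
      with (fst ((H s - H t) / RtoC (s - t))%C) by (simpl; field; lra).
    apply Hd'; auto.
  - intros t Ht. apply lim_in_fst, HC, Ht.
  - intros t Ht e He. destruct (lim_in_snd _ _ _ _ (HD t Ht) e He) as [d [Hd Hd']].
    exists d. split; auto. intros s Hs Ns Ds.
    replace ((snd (H s) - snd (H t)) / (s - t))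
      with (snd ((H s - H t) / RtoC (s - t))%C) by (simpl; field; lra).
    apply Hd'; auto.
  - intros t Ht. apply lim_in_snd, HC, Ht.
Qed.

Lemma Rabs_is_RInt_le (u : R -> R) a b I M : is_RInt u a b I ->
  (forall t, Rmin a b <= t <= Rmax a b -> Rabs (u t) <= M) -> Rabs I <= M * Rabs (b - a).
Proof.
  intros HI HB. destruct (Rle_dec a b) as [Hab|Hab].
  - rewrite Rmin_left, Rmax_right in HB by auto. rewrite <- (is_RInt_unique _ _ _ _ HI).
    rewrite (Rabs_right (b - a)) by lra. rewrite Rmult_comm.
    apply abs_RInt_le_const; auto. exists I; auto.
  - rewrite Rmin_right, Rmax_left in HB by lra.
    apply (is_RInt_swap (V := R_NormedModule)) in HI.
    pose proof (is_RInt_unique _ _ _ _ HI) as E.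
    replace (Rabs I) with (Rabs (RInt u b a)) by (rewrite E; unfold opp; simpl; apply Rabs_Ropp).
    rewrite (Rabs_left (b - a)), Rmult_comm by lra. replace (- (b - a)) with (a - b) by ring.
    apply abs_RInt_le_const; [lra | exists (opp I); auto | intros; apply HB; lra].
Qed.

Lemma Cmod_is_RInt_le (F : R -> CC) a b I1 I2 M :
  is_RInt (fun t => fst (F t)) a b I1 -> is_RInt (fun t => snd (F t)) a b I2 ->
  (forall t, Rmin a b <= t <= Rmax a b -> Cmod (F t) <= M) ->
  Cmod (I1, I2) <= 2 * M * Rabs (b - a).
Proof.
  intros H1 H2 HB.
  apply Rabs_is_RInt_le with (M := M) in H1;
    [|intros t Ht; eapply Rle_trans; [apply Rabs_fst_le_Cmod | apply HB; auto]].
  apply Rabs_is_RInt_le with (M := M) in H2;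
    [|intros t Ht; eapply Rle_trans; [apply Rabs_snd_le_Cmod | apply HB; auto]].
  pose proof (Cmod_le_Rabs_fst_snd (I1, I2)). simpl in *. lra.
Qed.

Section RegularArc.
Variables phi dphi : R -> CC.
Hypothesis phi_deriv : is_deriv01 phi dphi.
Hypothesis dphi_cont : cont01 dphi.
Hypothesis dphi_neq0 : forall t, 0 <= t <= 1 -> dphi t <> 0%C.
Hypothesis phi_inj : forall s t, 0 <= s <= 1 -> 0 <= t <= 1 -> phi s = phi t -> s = t.

Lemma phi_cont01 : cont01 phi.
Proof. exact (is_deriv01_cont01 _ _ phi_deriv). Qed.

Lemma chord_linear_approx x y (c : CC) eps : 0 <= x <= 1 -> 0 <= y <= 1 ->
  (forall w, Rmin y x <= w <= Rmax y x -> Cmod (dphi w - c) <= eps) ->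
  Cmod (phi x - phi y - c * RtoC (x - y)) <= 2 * eps * Rabs (x - y).
Proof.
  intros Hx Hy HB. destruct (is_RInt_deriv01 phi dphi phi_deriv dphi_cont y x Hy Hx) as [F1 F2].
  assert (G1 : is_RInt (fun t => fst (dphi t - c)%C) y x
                 ((fst (phi x) - fst (phi y)) - (x - y) * fst c)).
  { apply (is_RInt_minus (V := R_NormedModule) _ (fun _ => fst c)); auto.
    apply (is_RInt_const (V := R_NormedModule)). }
  assert (G2 : is_RInt (fun t => snd (dphi t - c)%C) y x
                 ((snd (phi x) - snd (phi y)) - (x - y) * snd c)).
  { apply (is_RInt_minus (V := R_NormedModule) _ (fun _ => snd c)); auto.
    apply (is_RInt_const (V := R_NormedModule)). }
  pose proof (Cmod_is_RInt_le _ _ _ _ _ eps G1 G2 HB) as K.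
  replace (phi x - phi y - c * RtoC (x - y))%C
    with ((fst (phi x) - fst (phi y)) - (x - y) * fst c,
          (snd (phi x) - snd (phi y)) - (x - y) * snd c)
    by (apply injective_projections; simpl; ring).
  exact K.
Qed.

Lemma phi_lipschitz : exists L, 0 <= L /\
  forall s t, 0 <= s <= 1 -> 0 <= t <= 1 -> Cmod (phi s - phi t) <= L * Rabs (s - t).
Proof.
  destruct (cont01_bounded dphi dphi_cont) as [M [HM0 HM]].
  exists (2 * M). split; [lra|]. intros s t Hs Ht.
  pose proof (chord_linear_approx s t 0%C M Hs Ht) as E.
  replace (phi s - phi t - 0 * RtoC (s - t))%C with (phi s - phi t)%C in E by ring.
  apply E. intros w Hw. replace (dphi w - 0)%C with (dphi w) by ring.
  apply HM, (between01 t s w Ht Hs Hw).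
Qed.

(* Near a diagonal point the chord is close to the nonzero tangent [dphi u]. *)
Lemma chord_lower_near_diagonal u : 0 <= u <= 1 -> exists r, r > 0 /\
  forall x y, 0 <= x <= 1 -> 0 <= y <= 1 -> Rabs (x - u) < r -> Rabs (y - u) < r ->
    r * Rabs (x - y) <= Cmod (phi x - phi y).
Proof.
  intros Hu. set (m := Cmod (dphi u)).
  assert (Hm : m > 0) by (apply Cmod_gt_0, dphi_neq0; auto).
  destruct (dphi_cont u Hu (m/4)) as [d [Hd Hd']]; [lra|].
  exists (Rmin d (m/2)). split; [apply Rmin_pos; lra|]. intros x y Hx Hy Dx Dy.
  pose proof (Rmin_l d (m/2)). pose proof (Rmin_r d (m/2)).
  assert (E : Cmod (phi x - phi y - dphi u * RtoC (x - y)) <= 2 * (m / 4) * Rabs (x - y)).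
  { apply chord_linear_approx; auto. intros w Hw. left. apply Hd'.
    - apply (between01 y x w Hy Hx Hw).
    - apply (Rabs_between_lt y x w u); auto; lra. }
  pose proof (Cmod_reverse_triangle (dphi u * RtoC (x - y))
                (dphi u * RtoC (x - y) - (phi x - phi y))) as T.
  replace (dphi u * RtoC (x - y) - (dphi u * RtoC (x - y) - (phi x - phi y)))%C
    with (phi x - phi y)%C in T by ring.
  rewrite Cmod_sub_sym in E. rewrite Cmod_mult, Cmod_R in T. fold m in T.
  pose proof (Rabs_pos (x - y)).
  assert (Rmin d (m/2) * Rabs (x - y) <= m / 2 * Rabs (x - y)) by (apply Rmult_le_compat_r; lra).
  lra.
Qed.

(* Away from the diagonal injectivity keeps [phi x] and [phi y] apart. *)
Lemma chord_lower_off_diagonal u v : 0 <= u <= 1 -> 0 <= v <= 1 -> u <> v -> exists r, r > 0 /\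
  forall x y, 0 <= x <= 1 -> 0 <= y <= 1 -> Rabs (x - u) < r -> Rabs (y - v) < r ->
    r * Rabs (x - y) <= Cmod (phi x - phi y).
Proof.
  intros Hu Hv N. set (p := Cmod (phi u - phi v)).
  assert (Hp : p > 0).
  { apply Cmod_gt_0, Cminus_neq0. intro E. apply N, phi_inj; auto. }
  destruct (phi_cont01 u Hu (p/4)) as [d1 [Hd1 H1]]; [lra|].
  destruct (phi_cont01 v Hv (p/4)) as [d2 [Hd2 H2]]; [lra|].
  pose proof (Rmin_l (Rmin d1 d2) (p/2)). pose proof (Rmin_r (Rmin d1 d2) (p/2)).
  pose proof (Rmin_l d1 d2). pose proof (Rmin_r d1 d2).
  set (r := Rmin (Rmin d1 d2) (p/2)) in *.
  assert (Hr : r > 0) by (apply Rmin_pos; [apply Rmin_pos|]; lra).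
  exists r. split; auto. intros x y Hx Hy Dx Dy.
  specialize (H1 x Hx ltac:(lra)). specialize (H2 y Hy ltac:(lra)).
  rewrite Cmod_sub_sym in H1.
  pose proof (Cmod_triangle_sub (phi u) (phi x) (phi v)) as T1.
  pose proof (Cmod_triangle_sub (phi x) (phi y) (phi v)) as T2. fold p in T1.
  assert (Rabs (x - y) <= 1) by (unfold Rabs; destruct Rcase_abs; lra).
  assert (r * Rabs (x - y) <= p / 2 * 1) by (apply Rmult_le_compat; try apply Rabs_pos; lra).
  lra.
Qed.

Lemma chord_lower_local u v : exists r, r > 0 /\ (0 <= u <= 1 -> 0 <= v <= 1 ->
  forall x y, 0 <= x <= 1 -> 0 <= y <= 1 -> Rabs (x - u) < r -> Rabs (y - v) < r ->
    r * Rabs (x - y) <= Cmod (phi x - phi y)).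
Proof.
  destruct (Rle_dec 0 u) as [Hu0|Hu0], (Rle_dec u 1) as [Hu1|Hu1],
    (Rle_dec 0 v) as [Hv0|Hv0], (Rle_dec v 1) as [Hv1|Hv1];
    try (exists 1; split; [lra | intros; lra]).
  destruct (Req_dec u v) as [<-|N].
  - destruct (chord_lower_near_diagonal u) as [r [Hr H]]; [lra|]. exists r. auto.
  - destruct (chord_lower_off_diagonal u v) as [r [Hr H]]; try lra. exists r. auto.
Qed.

(* A compactness argument on [0,1]^2 makes the local radii uniform. *)
Lemma chord_lower : exists c, c > 0 /\ forall x y, 0 <= x <= 1 -> 0 <= y <= 1 ->
  c * Rabs (x - y) <= Cmod (phi x - phi y).
Proof.
  set (r := fun u v => proj1_sig (constructive_indefinite_description _ (chord_lower_local u v))).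
  assert (Hr : forall u v, r u v > 0 /\ (0 <= u <= 1 -> 0 <= v <= 1 ->
     forall x y, 0 <= x <= 1 -> 0 <= y <= 1 -> Rabs (x - u) < r u v -> Rabs (y - v) < r u v ->
       r u v * Rabs (x - y) <= Cmod (phi x - phi y))).
  { intros u v. unfold r. destruct constructive_indefinite_description. simpl. auto. }
  destruct (compactness_value_2d 0 1 0 1 (fun u v => mkposreal (r u v) (proj1 (Hr u v))))
    as [d Hd].
  exists d. split; [apply cond_pos|]. intros x y Hx Hy.
  apply Rnot_lt_le. intro Hlt. apply (Hd x y Hx Hy).
  intros [u [v [Hu [Hv [Dx [Dy Dd]]]]]]. simpl in Dx, Dy, Dd.
  pose proof (proj2 (Hr u v) Hu Hv x y Hx Hy Dx Dy).
  assert (d * Rabs (x - y) <= r u v * Rabs (x - y))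
    by (apply Rmult_le_compat_r; [apply Rabs_pos | auto]).
  lra.
Qed.

Lemma arc_not_isolated z1 : on_arc phi z1 -> forall delta, delta > 0 ->
  exists z, (on_arc phi z /\ z <> z1) /\ dist_to z1 z < delta.
Proof.
  intros [t [Ht <-]] delta Hdel. destruct (phi_cont01 t Ht delta Hdel) as [d [Hd Hd']].
  set (eta := Rmin (1/2) (d/2)).
  assert (eta > 0) by (apply Rmin_pos; lra).
  assert (eta <= 1/2) by apply Rmin_l. assert (eta <= d/2) by apply Rmin_r.
  set (s := if Rle_dec t (1/2) then t + eta else t - eta).
  assert (Hs : 0 <= s <= 1) by (unfold s; destruct Rle_dec; lra).
  assert (Ns : s <> t) by (unfold s; destruct Rle_dec; lra).
  assert (Ds : Rabs (s - t) < d)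
    by (unfold s; destruct Rle_dec; unfold Rabs; destruct Rcase_abs; lra).
  exists (phi s). split; [split|].
  - exists s. auto.
  - intro E. apply Ns, phi_inj; auto.
  - apply (Hd' s Hs Ds).
Qed.

Lemma is_deriv_along_arc_unique g z1 L1 L2 : on_arc phi z1 ->
  is_deriv_along (on_arc phi) g z1 L1 -> is_deriv_along (on_arc phi) g z1 L2 -> L1 = L2.
Proof. intros Az. apply lim_in_unique. apply arc_not_isolated, Az. Qed.

Lemma is_deriv01_comp g t L : 0 <= t <= 1 -> is_deriv_along (on_arc phi) g (phi t) L ->
  lim_in (fun s => 0 <= s <= 1 /\ s <> t) (fun s => Rabs (s - t))
    (fun s => (g (phi s) - g (phi t)) / RtoC (s - t))%C (L * dphi t)%C.
Proof.
  intros Ht Hg.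
  apply lim_in_ext with
    (fun s => (g (phi s) - g (phi t)) / (phi s - phi t) * ((phi s - phi t) / RtoC (s - t)))%C.
  { intros s [Hs Ns]. field. split; [apply RtoC_neq0; lra|].
    apply Cminus_neq0. intro E. apply Ns, phi_inj; auto. }
  apply lim_in_mult; [|apply phi_deriv; auto].
  apply (lim_in_comp _ _ _ _ phi (fun z => (g z - g (phi t)) / (z - phi t))%C _ Hg).
  - intros s [Hs Ns]. split; [exists s; auto|]. intro E. apply Ns, phi_inj; auto.
  - intros eta He. destruct (phi_cont01 t Ht eta He) as [d [Hd Hd']].
    exists d. split; auto. intros s [Hs _] Ds. apply Hd'; auto.
Qed.

Lemma cont01_comp g : arc_cont (on_arc phi) g -> cont01 (fun s => g (phi s)).
Proof.
  intros Hg t Ht. apply (lim_in_comp (on_arc phi) (dist_to (phi t)) _ _ phi g).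
  - exact (Hg (phi t) (ex_intro _ t (conj Ht eq_refl))).
  - intros s Hs. exists s; auto.
  - intros eta He. destruct (phi_cont01 t Ht eta He) as [d [Hd Hd']]. exists d. split; auto.
Qed.

End RegularArc.

Section TaylorRemainder.
Variables (G : CC -> Prop) (f : CC -> CC) (Df : nat -> CC -> CC) (n : nat).
Hypothesis Df0 : forall z, G z -> Df 0%nat z = f z.
Hypothesis DfS : forall j, (j < S n)%nat -> forall z, G z -> is_deriv_along G (Df j) z (Df (S j) z).

Fixpoint taylor_rem (z2 : CC) (j : nat) (z : CC) : CC :=
  match j with
  | O => (f z2 - Df 0%nat z)%C
  | S j' => (taylor_rem z2 j' z - Df (S j') z * Cpow (z2 - z) (S j') / Cfact (S j'))%C
  end.

Definition divdiff_deriv (z2 : CC) (j : nat) (z : CC) : CC :=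
  (- Cfact j * Csign j * Cpow (/ (z - z2)) (S j) * taylor_rem z2 j z)%C.

Lemma taylor_rem_center z2 j : G z2 -> taylor_rem z2 j z2 = 0%C.
Proof.
  intros Gz. induction j as [|j IH]; simpl taylor_rem.
  - rewrite Df0 by auto. ring.
  - rewrite IH. simpl Cpow. field. apply Cfact_neq0.
Qed.

Lemma is_deriv_along_taylor_rem z2 j z : (j <= n)%nat -> G z ->
  is_deriv_along G (taylor_rem z2 j) z (- Df (S j) z * Cpow (z2 - z) j / Cfact j)%C.
Proof.
  intros Hj Gz. induction j as [|j IH].
  - replace (- Df 1%nat z * Cpow (z2 - z) 0 / Cfact 0)%C with (0 - Df 1%nat z)%C
      by (unfold Cfact; apply injective_projections; simpl; field).
    apply is_deriv_along_minus; [apply is_deriv_along_const | apply DfS; auto; lia].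
  - apply is_deriv_along_ext
      with (fun w => taylor_rem z2 j w - Df (S j) w * (/ Cfact (S j) * Cpow (z2 - w) (S j)))%C.
    { intros w. change (taylor_rem z2 (S j) w) with
        (taylor_rem z2 j w - Df (S j) w * Cpow (z2 - w) (S j) / Cfact (S j))%C.
      field. apply Cfact_neq0. }
    pose proof (is_deriv_along_pow G (fun w => z2 - w)%C z (0 - 1)%C j
      (is_deriv_along_minus G _ _ z _ _ (is_deriv_along_const G z2 z) (is_deriv_along_id G z)))
      as Hpow. cbv beta in Hpow.
    replace (- Df (S (S j)) z * Cpow (z2 - z) (S j) / Cfact (S j))%C with
      (- Df (S j) z * Cpow (z2 - z) j / Cfact j
       - (Df (S (S j)) z * (/ Cfact (S j) * Cpow (z2 - z) (S j))
          + Df (S j) z * (/ Cfact (S j) * (RtoC (INR (S j)) * Cpow (z2 - z) j * (0 - 1)))))%C.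
    + apply is_deriv_along_minus; [apply IH; lia|].
      apply (is_deriv_along_mult G (Df (S j)) (fun w => / Cfact (S j) * Cpow (z2 - w) (S j))%C);
        [apply DfS; auto; lia|].
      apply (is_deriv_along_scal G _ (fun w => Cpow (z2 - w) (S j))), Hpow.
    + rewrite Cfact_S. simpl Cpow. field.
      split; [apply Cfact_neq0 | apply RtoC_INR_S_neq0].
Qed.

Lemma divdiff_deriv_0 z2 z : G z -> G z2 -> z <> z2 -> divdiff_deriv z2 0 z = divdiff f z2 z.
Proof.
  intros Gz Gz2 N. unfold divdiff_deriv, divdiff. simpl taylor_rem. rewrite Df0 by auto.
  change (Defs.Cdiv (Csub (f z) (f z2)) (Csub z z2)) with ((f z - f z2) / (z - z2))%C.
  unfold Cfact, Csign. simpl. field. apply Cminus_neq0; auto.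
Qed.

Lemma is_deriv_along_divdiff_deriv z2 j z : (j <= n)%nat -> G z -> z <> z2 ->
  is_deriv_along G (divdiff_deriv z2 j) z (divdiff_deriv z2 (S j) z).
Proof.
  intros Hj Gz Nz. assert (U : (z - z2)%C <> 0%C) by (apply Cminus_neq0; auto).
  apply is_deriv_along_ext
    with (fun w => (- Cfact j * Csign j) * (Cpow (/ (w - z2)) (S j) * taylor_rem z2 j w))%C.
  { intros w. unfold divdiff_deriv. ring. }
  pose proof (is_deriv_along_pow G (fun w => / (w - z2))%C z (- (1 - 0) / ((z - z2) * (z - z2)))%C j
    (is_deriv_along_inv G (fun w => w - z2)%C z _
      (is_deriv_along_minus G _ _ z _ _ (is_deriv_along_id G z) (is_deriv_along_const G z2 z)) U))
    as Hpow. cbv beta in Hpow.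
  pose proof (is_deriv_along_scal G (- Cfact j * Csign j)%C _ z _
    (is_deriv_along_mult G _ _ z _ _ Hpow (is_deriv_along_taylor_rem z2 j z Hj Gz))) as K.
  match type of K with is_deriv_along _ _ _ ?L => replace (divdiff_deriv z2 (S j) z) with L end.
  { exact K. }
  unfold divdiff_deriv. simpl taylor_rem. rewrite Cfact_S, Csign_S. simpl Cpow.
  replace (z2 - z)%C with (- (z - z2))%C by ring.
  field. repeat split; auto; [apply Cfact_neq0 | apply RtoC_INR_S_neq0].
Qed.

Lemma deriv_chain_divdiff z2 k : G z2 -> (k <= S n)%nat ->
  deriv_chain G (fun z => G z /\ z <> z2) (divdiff f z2) (divdiff_deriv z2) k.
Proof.
  intros Gz2 Hk. split.
  - intros z [Gz Nz]. apply divdiff_deriv_0; auto.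
  - intros j Hj z [Gz Nz]. apply arc_deriv_is_deriv_along.
    apply is_deriv_along_divdiff_deriv; auto. lia.
Qed.

End TaylorRemainder.

Lemma is_lub_exists (E : R -> Prop) : bound E -> (exists x, E x) -> exists m, is_lub E m.
Proof. intros Hb Hne. destruct (completeness E Hb Hne) as [m Hm]. exists m. exact Hm. Qed.

Lemma arc_integral_intro (phi dphi : R -> CC) g t1 t2 I1 I2 :
  0 <= t1 <= 1 -> 0 <= t2 <= 1 ->
  is_RInt (fun t => fst (Cmul (g (phi t)) (dphi t))) t2 t1 I1 ->
  is_RInt (fun t => snd (Cmul (g (phi t)) (dphi t))) t2 t1 I2 ->
  arc_integral phi dphi g (phi t2) (phi t1) (I1, I2).
Proof.
  intros H1 H2 F1 F2.
  assert (pr1 : Riemann_integrable (fun t => fst (Cmul (g (phi t)) (dphi t))) t2 t1)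
    by (apply ex_RInt_Reals_0; exists I1; exact F1).
  assert (pr2 : Riemann_integrable (fun t => snd (Cmul (g (phi t)) (dphi t))) t2 t1)
    by (apply ex_RInt_Reals_0; exists I2; exact F2).
  exists t1, t2. do 4 (split; auto). exists pr1, pr2.
  rewrite <- !RInt_Reals, (is_RInt_unique _ _ _ _ F1), (is_RInt_unique _ _ _ _ F2). reflexivity.
Qed.

Lemma arc_integral_is_RInt (phi dphi : R -> CC) g z2 z1 v :
  arc_integral phi dphi g z2 z1 v -> exists t1 t2,
    0 <= t1 <= 1 /\ 0 <= t2 <= 1 /\ phi t1 = z1 /\ phi t2 = z2 /\
    is_RInt (fun t => fst (Cmul (g (phi t)) (dphi t))) t2 t1 (fst v) /\
    is_RInt (fun t => snd (Cmul (g (phi t)) (dphi t))) t2 t1 (snd v).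
Proof.
  intros [t1 [t2 [H1 [H2 [E1 [E2 [pr1 [pr2 ->]]]]]]]].
  exists t1, t2. do 4 (split; auto). simpl. rewrite <- !RInt_Reals.
  split; apply (RInt_correct (V := R_CompleteNormedModule)), ex_RInt_Reals_1; auto.
Qed.

Section DivdiffOnArc.
Variables (phi dphi : R -> CC) (f : CC -> CC) (Df : nat -> CC -> CC) (n : nat).
Hypothesis phi_deriv : is_deriv01 phi dphi.
Hypothesis dphi_cont : cont01 dphi.
Hypothesis dphi_neq0 : forall t, 0 <= t <= 1 -> dphi t <> 0%C.
Hypothesis phi_inj : forall s t, 0 <= s <= 1 -> 0 <= t <= 1 -> phi s = phi t -> s = t.
Hypothesis Df0 : forall z, on_arc phi z -> Df 0%nat z = f z.
Hypothesis DfS : forall j, (j < S n)%nat -> forall z, on_arc phi z ->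
  is_deriv_along (on_arc phi) (Df j) z (Df (S j) z).
Hypothesis Df_top_cont : arc_cont (on_arc phi) (Df (S n)).

Lemma Df_cont01 j : (j <= S n)%nat -> cont01 (fun t => Df j (phi t)).
Proof.
  intros Hj. apply (cont01_comp phi dphi phi_deriv). intros z1 Az.
  destruct (Nat.eq_dec j (S n)) as [->|N]; [apply Df_top_cont, Az|].
  exact (is_deriv_along_cont _ _ _ _ (DfS j ltac:(lia) z1 Az)).
Qed.

Lemma divdiff_deriv_unique z2 k D : on_arc phi z2 -> (k <= S n)%nat ->
  deriv_chain (on_arc phi) (fun z => on_arc phi z /\ z <> z2) (divdiff f z2) D k ->
  forall j, (j <= k)%nat -> forall z, on_arc phi z -> z <> z2 ->
    D j z = divdiff_deriv f Df z2 j z.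
Proof.
  intros Az2 Hk [D0 DS] j. induction j as [|i IH]; intros Hj z Az Nz.
  - rewrite D0 by auto. symmetry. apply (divdiff_deriv_0 (on_arc phi)); auto.
  (* [D i] and [divdiff_deriv f Df z2 i] agree near [z], hence so do their derivatives *)
  - apply (is_deriv_along_arc_unique phi dphi phi_deriv phi_inj (divdiff_deriv f Df z2 i) z);
      auto.
    + apply is_deriv_along_ext_loc with (D i) (Cmod (z - z2)).
      * apply Cmod_gt_0, Cminus_neq0; auto.
      * intros w Aw Dw. apply IH; auto; [lia|]. intros ->. rewrite Cmod_sub_sym in Dw. lra.
      * apply IH; auto; lia.
      * apply arc_deriv_is_deriv_along, DS; auto; lia.
    + apply (is_deriv_along_divdiff_deriv (on_arc phi) f Df n DfS); auto; lia.
Qed.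

Variable k : nat.
Hypothesis k_lt : (S k <= n)%nat.

Definition remainder_integrand (z2 z : CC) : CC := (Cpow (z - z2) (S k) * Df (S (S k)) z)%C.

(* [- (z2 - z)^(k+1) / (k+1)! = remainder_scale * (z - z2)^(k+1)] *)
Definition remainder_scale : R := (-1) ^ k / INR (Factorial.fact (S k)).

Lemma remainder_scale_neq0 : remainder_scale <> 0.
Proof.
  apply Rmult_integral_contrapositive. split; [apply pow_nonzero; lra|].
  apply Rinv_neq_0_compat. exact (INR_fact_neq_0 (S k)).
Qed.

Lemma RtoC_remainder_scale : RtoC remainder_scale = (Csign k / Cfact (S k))%C.
Proof.
  unfold remainder_scale, Csign, Cfact. pose proof (INR_fact_neq_0 (S k)).
  apply injective_projections; simpl; field; auto.
Qed.

Lemma is_deriv01_taylor_rem z2 : is_deriv01 (fun t => taylor_rem f Df z2 (S k) (phi t))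
  (fun t => RtoC remainder_scale * (remainder_integrand z2 (phi t) * dphi t))%C.
Proof.
  intros t Ht.
  pose proof (is_deriv01_comp phi dphi phi_deriv phi_inj _ t _ Ht
    (is_deriv_along_taylor_rem (on_arc phi) f Df n DfS z2 (S k) (phi t) k_lt
      (ex_intro _ t (conj Ht eq_refl)))) as K.
  match type of K with lim_in _ _ _ ?L =>
    replace (RtoC remainder_scale * (remainder_integrand z2 (phi t) * dphi t))%C with L end.
  { exact K. }
  unfold remainder_integrand. rewrite RtoC_remainder_scale, (Cpow_sub_swap z2 (phi t)), Csign_S.
  field. apply Cfact_neq0.
Qed.

Lemma remainder_integrand_cont01 z2 : cont01 (fun t => remainder_integrand z2 (phi t) * dphi t)%C.
Proof.
  apply cont01_mult; auto. apply cont01_mult; [|apply Df_cont01; lia].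
  apply cont01_pow, cont01_minus; [apply (is_deriv01_cont01 _ _ phi_deriv) | apply cont01_const].
Qed.

Lemma is_RInt_remainder_integrand z2 t1 t2 : 0 <= t1 <= 1 -> 0 <= t2 <= 1 -> phi t2 = z2 ->
  is_RInt (fun t => fst (Cmul (remainder_integrand z2 (phi t)) (dphi t))) t2 t1
    (fst (taylor_rem f Df z2 (S k) (phi t1)) / remainder_scale) /\
  is_RInt (fun t => snd (Cmul (remainder_integrand z2 (phi t)) (dphi t))) t2 t1
    (snd (taylor_rem f Df z2 (S k) (phi t1)) / remainder_scale).
Proof.
  intros H1 H2 E.
  assert (K0 : taylor_rem f Df z2 (S k) (phi t2) = 0%C).
  { rewrite E. apply (taylor_rem_center (on_arc phi)); auto. rewrite <- E. exists t2; auto. }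
  assert (Hc : cont01 (fun t => RtoC remainder_scale * (remainder_integrand z2 (phi t) * dphi t))%C)
    by (apply cont01_mult; [apply cont01_const | apply remainder_integrand_cont01]).
  destruct (is_RInt_deriv01 _ _ (is_deriv01_taylor_rem z2) Hc t2 t1 H2 H1) as [F1 F2].
  rewrite K0 in F1, F2. pose proof remainder_scale_neq0 as Hs.
  set (s := remainder_scale) in *. set (K := taylor_rem f Df z2 (S k) (phi t1)) in *.
  clearbody s K.
  split.
  - apply is_RInt_ext
      with (fun t => / s * fst (RtoC s * (remainder_integrand z2 (phi t) * dphi t))%C).
    + intros x _. simpl. field. exact Hs.
    + replace (fst K / s) with (/ s * (fst K - fst (RtoC 0))) by (simpl; field; exact Hs).
      exact (is_RInt_scal (V := R_NormedModule) _ _ _ _ _ F1).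
  - apply is_RInt_ext
      with (fun t => / s * snd (RtoC s * (remainder_integrand z2 (phi t) * dphi t))%C).
    + intros x _. simpl. field. exact Hs.
    + replace (snd K / s) with (/ s * (snd K - snd (RtoC 0))) by (simpl; field; exact Hs).
      exact (is_RInt_scal (V := R_NormedModule) _ _ _ _ _ F2).
Qed.

Lemma arc_integral_remainder z2 z1 v :
  arc_integral phi dphi (remainder_integrand z2) z2 z1 v ->
  (RtoC remainder_scale * v)%C = taylor_rem f Df z2 (S k) z1.
Proof.
  intros Hv.
  destruct (arc_integral_is_RInt _ _ _ _ _ _ Hv) as [t1 [t2 [H1 [H2 [<- [E2 [F1 F2]]]]]]].
  destruct (is_RInt_remainder_integrand z2 t1 t2 H1 H2 E2) as [G1 G2].
  pose proof (is_RInt_unique _ _ _ _ F1) as U1. pose proof (is_RInt_unique _ _ _ _ G1) as V1.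
  pose proof (is_RInt_unique _ _ _ _ F2) as U2. pose proof (is_RInt_unique _ _ _ _ G2) as V2.
  rewrite U1 in V1. rewrite U2 in V2. clear U1 U2.
  pose proof remainder_scale_neq0. destruct v as [v1 v2]. simpl in V1, V2. subst v1 v2.
  apply injective_projections; simpl; field; split; auto; exact (INR_fact_neq_0 (S k)).
Qed.

Lemma arc_integral_remainder_exists z2 z1 : on_arc phi z1 -> on_arc phi z2 ->
  exists v, arc_integral phi dphi (remainder_integrand z2) z2 z1 v.
Proof.
  intros [t1 [H1 <-]] [t2 [H2 E2]].
  destruct (is_RInt_remainder_integrand z2 t1 t2 H1 H2 E2) as [F1 F2].
  eexists. rewrite <- E2 at 2. exact (arc_integral_intro _ _ _ _ _ _ _ H1 H2 F1 F2).
Qed.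

Lemma divdiff_deriv_remainder z2 z1 v : on_arc phi z1 -> on_arc phi z2 -> z1 <> z2 ->
  arc_integral phi dphi (remainder_integrand z2) z2 z1 v ->
  (RtoC (INR (S k)) * divdiff_deriv f Df z2 k z1)%C = (Df (S k) z1 - v / Cpow (z1 - z2) (S k))%C.
Proof.
  intros Az1 Az2 N Hv. pose proof (arc_integral_remainder _ _ _ Hv) as Vv.
  assert (U : (z1 - z2)%C <> 0%C) by (apply Cminus_neq0; auto).
  change (taylor_rem f Df z2 (S k) z1) with
    (taylor_rem f Df z2 k z1 - Df (S k) z1 * Cpow (z2 - z1) (S k) / Cfact (S k))%C in Vv.
  assert (Rk : taylor_rem f Df z2 k z1 =
               (RtoC remainder_scale * v + Df (S k) z1 * Cpow (z2 - z1) (S k) / Cfact (S k))%C)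
    by (rewrite Vv; field; apply Cfact_neq0).
  unfold divdiff_deriv. rewrite Rk, Cpow_Cinv, (Cpow_sub_swap z2 z1), Csign_S,
    RtoC_remainder_scale, Cfact_S by auto.
  transitivity (Csign k * Csign k * (Df (S k) z1 - v / Cpow (z1 - z2) (S k)))%C.
  - field. repeat split; [apply Cpow_neq0; auto | apply Cfact_neq0 | apply RtoC_INR_S_neq0].
  - rewrite Csign_sqr. ring.
Qed.

Lemma remainder_integrand_le : exists M, 0 <= M /\ forall z2 s t, 0 <= s <= 1 -> 0 <= t <= 1 ->
  phi s = z2 -> Cmod (remainder_integrand z2 (phi t) * dphi t)%C <= M * Rabs (t - s) ^ S k.
Proof.
  destruct (phi_lipschitz phi dphi phi_deriv dphi_cont) as [L [HL HL']].
  destruct (cont01_bounded _ (Df_cont01 (S (S k)) ltac:(lia))) as [M2 [HM2 HM2']].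
  destruct (cont01_bounded _ dphi_cont) as [M3 [HM3 HM3']].
  pose proof (pow_le L (S k) HL).
  exists (L ^ S k * M2 * M3). split; [apply Rmult_le_pos; [apply Rmult_le_pos|]; auto|].
  intros z2 s t Hs Ht <-.
  unfold remainder_integrand. rewrite !Cmod_mult, Cmod_pow.
  assert (Hlip : Cmod (phi t - phi s) ^ S k <= (L * Rabs (t - s)) ^ S k)
    by (apply pow_incr; split; [apply Cmod_ge_0 | apply HL'; auto]).
  rewrite Rpow_mult_distr in Hlip.
  pose proof (HM2' t Ht). pose proof (HM3' t Ht).
  pose proof (Cmod_ge_0 (Df (S (S k)) (phi t))). pose proof (Cmod_ge_0 (dphi t)).
  pose proof (pow_le (Cmod (phi t - phi s)) (S k) (Cmod_ge_0 _)).
  pose proof (pow_le (Rabs (t - s)) (S k) (Rabs_pos _)).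
  replace (L ^ S k * M2 * M3 * Rabs (t - s) ^ S k) with (L ^ S k * Rabs (t - s) ^ S k * M2 * M3)
    by ring.
  apply Rmult_le_compat; nra.
Qed.

Lemma remainder_ratio_bounded : exists B, forall z1 z2 v, z1 <> z2 ->
  arc_integral phi dphi (remainder_integrand z2) z2 z1 v -> Cmod (v / Cpow (z1 - z2) (S k)) <= B.
Proof.
  destruct remainder_integrand_le as [M [HM HM']].
  destruct (chord_lower phi dphi phi_deriv dphi_cont dphi_neq0 phi_inj) as [c [Hc Hc']].
  exists (2 * M / c ^ S k). intros z1 z2 v N Hv.
  destruct (arc_integral_is_RInt _ _ _ _ _ _ Hv) as [t1 [t2 [H1 [H2 [<- [<- [F1 F2]]]]]]].
  set (d := Rabs (t1 - t2)).
  assert (Hd : 0 < d) by (apply Rabs_pos_lt; intro E; apply N; f_equal; lra).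
  assert (Hd1 : d <= 1) by (unfold d, Rabs; destruct Rcase_abs; lra).
  assert (Hv_le : Cmod v <= 2 * (M * d ^ S k) * d).
  { destruct v as [v1 v2]. apply (Cmod_is_RInt_le _ _ _ _ _ _ F1 F2).
    intros t Ht. eapply Rle_trans; [apply (HM' _ t2 t); auto; apply (between01 t2 t1); auto|].
    apply Rmult_le_compat_l; auto. apply pow_incr. split; [apply Rabs_pos|].
    apply Rabs_between_le; auto. }
  assert (Hpow : (c * d) ^ S k <= Cmod (Cpow (phi t1 - phi t2) (S k)))
    by (rewrite Cmod_pow; apply pow_incr; split; [nra | apply Hc'; auto]).
  assert (Hcd : 0 < (c * d) ^ S k) by (apply pow_lt; nra).
  rewrite Cmod_div by (apply Cpow_neq0, Cminus_neq0; auto).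
  apply Rle_trans with (2 * (M * d ^ S k) * d / (c * d) ^ S k).
  - unfold Rdiv. apply Rmult_le_compat; auto; [apply Cmod_ge_0 | left; apply Rinv_0_lt_compat; lra
      | apply Rinv_le_contravar; auto].
  - rewrite Rpow_mult_distr.
    assert (0 < c ^ S k) by (apply pow_lt; lra). assert (0 < d ^ S k) by (apply pow_lt; lra).
    replace (2 * (M * d ^ S k) * d / (c ^ S k * d ^ S k)) with (2 * M / c ^ S k * d)
      by (field; lra).
    assert (0 <= 2 * M / c ^ S k)
      by (apply Rmult_le_pos; [lra | left; apply Rinv_0_lt_compat; lra]).
    nra.
Qed.

Definition deriv_norms (x : R) : Prop := exists z, on_arc phi z /\ x = Cmod (Df (S k) z).

Definition remainder_ratios (x : R) : Prop := exists z1 z2 v,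
  on_arc phi z1 /\ on_arc phi z2 /\ z1 <> z2 /\
  arc_integral phi dphi (remainder_integrand z2) z2 z1 v /\
  x = Cmod (v / Cpow (z1 - z2) (S k))%C.

Lemma deriv_norms_lub : exists S1, is_lub deriv_norms S1.
Proof.
  apply is_lub_exists.
  - destruct (cont01_bounded _ (Df_cont01 (S k) ltac:(lia))) as [M [_ HM]].
    exists M. intros x [z [[t [Ht <-]] ->]]. apply HM, Ht.
  - exists (Cmod (Df (S k) (phi 0))), (phi 0). split; auto. exists 0. split; auto. lra.
Qed.

Lemma remainder_ratios_lub : exists S2, is_lub remainder_ratios S2.
Proof.
  apply is_lub_exists.
  - destruct remainder_ratio_bounded as [B HB].
    exists B. intros x [z1 [z2 [v [_ [_ [N [Hv ->]]]]]]]. apply (HB z1 z2 v N Hv).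
  - assert (A0 : on_arc phi (phi 0)) by (exists 0; split; auto; lra).
    assert (A1 : on_arc phi (phi 1)) by (exists 1; split; auto; lra).
    destruct (arc_integral_remainder_exists (phi 0) (phi 1) A1 A0) as [v Hv].
    eexists. exists (phi 1), (phi 0), v. repeat split; auto.
    intro E. apply phi_inj in E; lra.
Qed.

Lemma divdiff_deriv_le S1 S2 z1 z2 : is_lub deriv_norms S1 -> is_lub remainder_ratios S2 ->
  on_arc phi z1 -> on_arc phi z2 -> z1 <> z2 ->
  Cmod (divdiff_deriv f Df z2 k z1) <= (S1 + S2) / INR (S k).
Proof.
  intros [HS1 _] [HS2 _] Az1 Az2 N.
  destruct (arc_integral_remainder_exists z2 z1 Az1 Az2) as [v Hv].
  assert (INp : INR (S k) > 0) by (apply lt_0_INR; lia).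
  replace (divdiff_deriv f Df z2 k z1)
    with ((Df (S k) z1 - v / Cpow (z1 - z2) (S k)) / RtoC (INR (S k)))%C
    by (rewrite <- divdiff_deriv_remainder by auto; field; apply RtoC_INR_S_neq0).
  rewrite Cmod_div by apply RtoC_INR_S_neq0. rewrite Cmod_R, Rabs_right by lra.
  apply Rmult_le_compat_r; [left; apply Rinv_0_lt_compat; lra|].
  replace (Df (S k) z1 - v / Cpow (z1 - z2) (S k))%C
    with (Df (S k) z1 + - (v / Cpow (z1 - z2) (S k)))%C by ring.
  eapply Rle_trans; [apply Cmod_triangle|]. rewrite Cmod_opp. apply Rplus_le_compat.
  - apply HS1. exists z1. auto.
  - apply HS2. exists z1, z2, v. repeat split; auto.
Qed.

Lemma divdiff_deriv_estimate : exists S1 S2,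
  is_lub deriv_norms S1 /\ is_lub remainder_ratios S2 /\
  forall z1 z2, on_arc phi z1 -> on_arc phi z2 -> z1 <> z2 ->
    (exists D, deriv_chain (on_arc phi) (fun z => on_arc phi z /\ z <> z2) (divdiff f z2) D k) /\
    (forall D, deriv_chain (on_arc phi) (fun z => on_arc phi z /\ z <> z2) (divdiff f z2) D k ->
       Cmod (D k z1) <= (S1 + S2) / INR (S k)).
Proof.
  destruct deriv_norms_lub as [S1 HS1]. destruct remainder_ratios_lub as [S2 HS2].
  exists S1, S2. do 2 (split; auto). intros z1 z2 Az1 Az2 N. split.
  - exists (divdiff_deriv f Df z2). apply (deriv_chain_divdiff (on_arc phi) f Df n); auto; lia.
  - intros D HD. rewrite (divdiff_deriv_unique z2 k D Az2 ltac:(lia) HD k (le_n k) z1 Az1 N).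
    apply divdiff_deriv_le; auto.
Qed.

End DivdiffOnArc.

Theorem lemma4 (n : nat) (phi dphi : R -> Cx) (f : Cx -> Cx) (Df : nat -> Cx -> Cx) :
  (2 <= n)%nat ->
  admissible_param phi dphi ->
  deriv_chain (on_arc phi) (on_arc phi) f Df (S n) ->
  arc_cont (on_arc phi) (Df (S n)) ->
  forall k : nat, (1 <= k <= n - 1)%nat ->
  exists S1 S2 : R,
    is_lub (fun x => exists z, on_arc phi z /\ x = Cnorm (Df (S k) z)) S1 /\
    is_lub (fun x => exists z1 z2 v,
               on_arc phi z1 /\ on_arc phi z2 /\ z1 <> z2 /\
               arc_integral phi dphi
                 (fun z => Cmul (Defs.Cpow (Csub z z2) (S k)) (Df (S (S k)) z)) z2 z1 v /\
               x = Cnorm (Cdiv v (Defs.Cpow (Csub z1 z2) (S k)))) S2 /\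
    forall z1 z2, on_arc phi z1 -> on_arc phi z2 -> z1 <> z2 ->
      (exists D, deriv_chain (on_arc phi) (fun z => on_arc phi z /\ z <> z2) (divdiff f z2) D k) /\
      (forall D, deriv_chain (on_arc phi) (fun z => on_arc phi z /\ z <> z2) (divdiff f z2) D k ->
         Cnorm (D k z1) <= (S1 + S2) / INR (S k)).
Proof.
  intros _ [Hpd [Hcd [Hnz Hinj]]] [Df0 DfS] Htop k Hk.
  apply (divdiff_deriv_estimate phi dphi f Df n).
  - apply param_deriv_is_deriv01, Hpd.
  - apply cont_on01_cont01, Hcd.
  - exact Hnz.
  - exact Hinj.
  - exact Df0.
  - intros j Hj z Hz. apply arc_deriv_is_deriv_along, DfS; auto.
  - exact Htop.
  - lia.
Qed.
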